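(* Let $p$ be a prime, let $\lambda$ be a partition, and write $r(\lambda)=(r_1,\ldots,r_{p-1})$. Then $c^{(p)}_\lambda\neq 0$ if and only if both of the following hold: (i) $p\nmid|\lambda|$; (ii) there exists $a\in\{1,\ldots,p-1\}$ with $r_a=\max r(\lambda)$ such that $\max r(\lambda)\leq |{}^b r(\lambda)|_p$, where $b\in\{1,\ldots,p-1\}$ satisfies $ab\equiv 1 \pmod p$.
   Context: A composition of $n\in\mathbb{N}_0$ is a finite sequence $\delta=(\delta_1,\ldots,\delta_s)$ of positive integers with $\sum_i\delta_i=n$; write $\ell(\delta)=s$, $|\delta|=n$; the unique composition of $0$ is the empty composition. A partition is a composition with $\delta_1\geq\cdots\geq\delta_s$. Partial sums: $\delta^+_j=\sum_{i=1}^j\delta_i$. For a positive integer $d$, $n_d(\delta)=|\{i:\delta_i=d\}|$. For a positive integer $q$, a composition $\delta$ is called $q'$-cumulative if it is nonempty and $q\nmid\delta^+_j$ for all $1\leq j\leq\ell(\delta)$ (the empty composition is not regarded as $q'$-cumulative). For a partition $\lambda$, $\mathscr{C}(\lambda)$ is the set of compositions that are rearrangements of $\lambda$, and $c^{(q)}_\lambda$ is the number of $q'$-cumulative $\delta\in\mathscr{C}(\lambda)$. For $0\leq j\leq q-1$, $r_j(\delta)=\sum_{i\equiv j \,(\mathrm{mod}\ q)}n_i(\delta)$, and $r(\delta)=(r_1(\delta),\ldots,r_{q-1}(\delta))\in\mathbb{N}_0^{q-1}$. For $\mathbf{r}=(r_1,\ldots,r_{q-1})\in\mathbb{N}_0^{q-1}$: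 $|\mathbf{r}|_q=(q-1)+\sum_{i=2}^{q-1}(q-i)r_i$, $\max\mathbf{r}=\max\{r_1,\ldots,r_{q-1}\}$, and for $a$ invertible modulo $q$, ${}^a\mathbf{r}=(r'_1,\ldots,r'_{q-1})$ where $r'_j=r_i$ whenever $j\equiv ai \pmod q$ ($1\le i,j\le q-1$). *)

From mathcomp Require Import all_boot.
Set Implicit Arguments. Unset Strict Implicit. Unset Printing Implicit Defensive.

Definition is_partition (l : seq nat) : bool :=
  all (fun x => 0 < x) l && sorted geq l.

Definition psum (d : seq nat) (j : nat) : nat := sumn (take j d).

Definition cumulative (q : nat) (d : seq nat) : bool :=
  (d != [::]) && all (fun j => ~~ (q %| psum d j)) (iota 1 (size d)).

(* C(lambda): the rearrangements of lambda (permutations is duplicate-free);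
   c^(q)_lambda = number of q'-cumulative ones. *)
Definition cnum (q : nat) (l : seq nat) : nat := count (cumulative q) (permutations l).

Definition nmult (d : nat) (dl : seq nat) : nat := count (pred1 d) dl.

Definition rj (q : nat) (dl : seq nat) (j : nat) : nat :=
  \sum_(1 <= i < (\max_(x <- dl) x).+1 | i == j %[mod q]) nmult i dl.

(* r vectors are functions nat -> nat, meaningful on indices 1..q-1 *)
Definition rvec (q : nat) (dl : seq nat) : nat -> nat := rj q dl.

Definition rnorm (q : nat) (r : nat -> nat) : nat :=
  (q - 1) + \sum_(2 <= i < q) (q - i) * r i.

Definition rmax (q : nat) (r : nat -> nat) : nat := \max_(1 <= i < q) r i.

(* ^a r : r'_j = r_i whenever j = a i (mod q), 1 <= i,j <= q-1 *)
Definition rtwist (q a : nat) (r : nat -> nat) : nat -> nat :=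
  fun j => r (nth 0 [seq i <- iota 1 q.-1 | a * i == j %[mod q]] 0).

From mathcomp Require Import all_boot zify.
Set Implicit Arguments. Unset Strict Implicit. Unset Printing Implicit Defensive.

(* Fix b with a b = 1 (mod p), where r_a is maximal, and look at the residues b x mod p of
   the parts x.  Then r_a is the number M of parts of residue 1, and max r <= |^b r|_p
   becomes the weight bound p M + T <= p - 1 + p N, where N counts the parts of nonzero
   residue and T is the sum of the residues.  Along a p'-cumulative arrangement,
   p M + T - p N never exceeds the residue of the current partial sum, which gives
   necessity.  Conversely, if the weight bound holds and M is maximal, some part can be
   removed so that both properties persist for the remaining parts, either for the same b
   or for b t^-1, where t is the residue of the total; placing the removed parts last, in
   reverse order of removal, yields a p'-cumulative arrangement. *)

Section Cumulative.
Variable p : nat.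

Definition ndvd_psums (d : seq nat) : bool :=
  all (fun j => ~~ (p %| psum d j)) (iota 1 (size d)).

Definition has_cumulative_perm (l : seq nat) : Prop :=
  exists2 d, perm_eq d l & cumulative p d.

Lemma cnum_neq0 l : (cnum p l != 0) <-> has_cumulative_perm l.
Proof.
rewrite /cnum -lt0n -has_count; split => [/hasP[d]|[d]].
  by rewrite mem_permutations; exists d.
by rewrite -mem_permutations => ??; apply/hasP; exists d.
Qed.

Lemma ndvd_psums_rcons d x :
  ndvd_psums (rcons d x) = ndvd_psums d && ~~ (p %| sumn (rcons d x)).
Proof.
rewrite /ndvd_psums size_rcons -[(size d).+1]addn1 iotaD all_cat /= andbT add1n.
congr andb; last by rewrite /psum take_oversize // size_rcons.
apply: eq_in_all => j; rewrite mem_iota => /andP[_ lt_j].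
rewrite /psum -cats1 take_cat; case: ltnP => // le_j.
have ->: j = size d by lia.
by rewrite subnn take0 cats0 take_size.
Qed.

Lemma has_cumulative_perm_rem x l :
  x \in l -> ~~ (p %| sumn l) ->
  rem x l = [::] \/ has_cumulative_perm (rem x l) -> has_cumulative_perm l.
Proof.
move=> xl ndvd_l rem_good.
have [d perm_d ok_d] : exists2 d, perm_eq d (rem x l) & ndvd_psums d.
  by case: rem_good => [->|[d ? /andP[]]]; [exists [::] | exists d].
have perm_dx : perm_eq (rcons d x) l.
  by rewrite perm_rcons perm_sym (perm_trans (perm_to_rem xl)) // perm_cons perm_sym.
exists (rcons d x) => //.
by rewrite /cumulative -/(ndvd_psums _) ndvd_psums_rcons ok_d (perm_sumn perm_dx) ndvd_l;
  case: (d).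
Qed.

Lemma cumulative_ndvd_sumn d : cumulative p d -> ~~ (p %| sumn d).
Proof.
case/lastP: d => // d x /andP[_]; rewrite -/(ndvd_psums _) ndvd_psums_rcons.
by case/andP.
Qed.

End Cumulative.

Section Residues.
Variable p : nat.
Hypothesis p_prime : prime p.

Let p_gt1 : 1 < p. Proof. exact: prime_gt1. Qed.
Let p_gt0 : 0 < p. Proof. exact: prime_gt0. Qed.

Definition res (b x : nat) : nat := b * x %% p.
Definition count_res (b c : nat) (l : seq nat) : nat := count (fun x => res b x == c) l.
Definition count_nz (b : nat) (l : seq nat) : nat := count (fun x => res b x != 0) l.
Definition count_big (b : nat) (l : seq nat) : nat := count (fun x => 1 < res b x) l.
Definition sum_res (b : nat) (l : seq nat) : nat := sumn (map (res b) l).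

Lemma res_lt b x : res b x < p.
Proof. by rewrite ltn_pmod. Qed.

Lemma res_eq0 b x : ~~ (p %| b) -> (res b x == 0) = (p %| x).
Proof. by move=> ndvd_b; rewrite -/(dvdn p (b * x)) Euclid_dvdM // (negbTE ndvd_b). Qed.

Lemma sum_res_mod b l : sum_res b l = b * sumn l %[mod p].
Proof.
rewrite /sum_res; elim: l => [|x l IHl] /=; first by rewrite muln0.
by rewrite -modnDmr IHl modnDmr /res modnDml mulnDr.
Qed.

Lemma sum_res_rem b x l : x \in l -> sum_res b l = res b x + sum_res b (rem x l).
Proof. by move=> xl; rewrite /sum_res (perm_sumn (perm_map _ (perm_to_rem xl))). Qed.

Lemma count_rem_cons (P : pred nat) x l : x \in l -> count P l = P x + count P (rem x l).
Proof. by move=> xl; rewrite (permP (perm_to_rem xl)). Qed.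

Lemma dvd_sumn_rem b x l : ~~ (p %| b) -> x \in l ->
  (p %| sumn (rem x l)) = (res b x == res b (sumn l)).
Proof.
move=> ndvd_b xl; rewrite /res (perm_sumn (perm_to_rem xl)) /= mulnDr.
rewrite -{1}[b * x]addn0 eqn_modDl mod0n eq_sym.
by rewrite -/(dvdn p _) Euclid_dvdM // (negbTE ndvd_b).
Qed.

Lemma count_nzE b l : ~~ (p %| b) -> count_nz b l = count (fun x => ~~ (p %| x)) l.
Proof. by move=> ndvd_b; apply: eq_count => x; rewrite /= res_eq0. Qed.

Lemma count_nz_split b l : count_nz b l = count_res b 1 l + count_big b l.
Proof.
rewrite /count_nz /count_res /count_big.
by elim: l => //= x l ->; case: (res b x) => [|[|n]] /=; lia.
Qed.

Lemma count_res_le_big b c l : 1 < c -> count_res b c l <= count_big b l.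
Proof. by move=> c_gt1; apply: sub_count => x /= /eqP->. Qed.

Lemma count_res_add_le b c l :
  0 < c -> c != 1 -> count_res b c l + count_res b 1 l <= count_nz b l.
Proof.
move=> c_gt0 c_neq1; rewrite count_nz_split addnC leq_add2l count_res_le_big //.
by rewrite ltn_neqAle eq_sym c_neq1.
Qed.

Lemma count_nz_le_sum_res b l : count_nz b l <= sum_res b l.
Proof. by rewrite /count_nz /sum_res; elim: l => //= x l; case: (res b x) => /=; lia. Qed.

Lemma sum_res_le b k l : {in l, forall x, 1 < res b x -> res b x <= k} ->
  sum_res b l <= count_res b 1 l + k * count_big b l.
Proof.
rewrite /count_res /count_big /sum_res; elim: l => //= x l IHl le_k.
have {IHl} : sumn (map (res b) l) <=
    count (fun x => res b x == 1) l + k * count (fun x => 1 < res b x) l.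
  by apply: IHl => y yl; apply: le_k; rewrite inE yl orbT.
by have := le_k x (mem_head x l); case: (res b x) => [|[|n]] /=; lia.
Qed.

Lemma weighted_count_res b l :
  \sum_(1 <= c < p) (p - c) * count_res b c l + sum_res b l = p * count_nz b l.
Proof.
rewrite /count_res /count_nz /sum_res; elim: l => [|x l IHl] /=.
  by rewrite muln0 addn0; apply: big1 => c _; rewrite muln0.
under eq_bigr => c _ do rewrite mulnDr.
rewrite big_split /= mulnDr -{}IHl.
have -> : \sum_(1 <= c < p) (p - c) * (res b x == c) =
          if 0 < res b x then p - res b x else 0.
  rewrite (eq_bigr (fun c => if c == res b x then p - c else 0)) => [|c _]; last first.
    by rewrite eq_sym; case: eqP; rewrite ?muln1 ?muln0.
  by rewrite -big_mkcond big_nat1_eq res_lt andbT.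
by have := res_lt b x; case: (res b x) => /= [|r]; lia.
Qed.

Lemma ndvd_mulmod_eq1 t u : t * u = 1 %[mod p] -> ~~ (p %| u).
Proof.
by move=> tu1; apply/dvdnP => -[k def_u]; move: tu1; rewrite def_u mulnA modnMl modn_small.
Qed.

Lemma mulmod_inv t : ~~ (p %| t) -> exists2 u, 0 < u < p & t * u = 1 %[mod p].
Proof.
move=> ndvd_t; have t_gt0 : 0 < t by case: t ndvd_t; rewrite ?dvdn0.
have co_tp : gcdn t p = 1.
  by apply/eqP; rewrite -/(coprime t p) coprime_sym prime_coprime.
case: (egcdnP p t_gt0) => u k def_ut _.
have tu1 : t * (u %% p) = 1 %[mod p] by rewrite modnMmr mulnC def_ut co_tp modnMDl.
exists (u %% p) => //; rewrite ltn_pmod // andbT lt0n.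
by move: (ndvd_mulmod_eq1 tu1); apply: contraNneq => ->.
Qed.

Lemma res_mulr_eq1 b u t x : t * u = 1 %[mod p] -> t < p ->
  (res (b * u) x == 1) = (res b x == t).
Proof.
move=> tu1 t_lt; have := res_lt b x.
have -> : res (b * u) x = u * res b x %% p by rewrite /res modnMmr mulnCA mulnA.
move: (res b x) => y y_lt; apply/eqP/eqP => [uy1|->]; last first.
  by rewrite mulnC tu1 modn_small.
have : t * (u * y) = t %[mod p] by rewrite -modnMmr uy1 muln1.
by rewrite mulnA -modnMml tu1 modnMml mul1n !modn_small.
Qed.

Definition criterion (b : nat) (l : seq nat) : Prop :=
  [/\ ~~ (p %| sumn l),
      forall c, 0 < c < p -> count_res b c l <= count_res b 1 l &
      p * count_res b 1 l + sum_res b l <= p - 1 + p * count_nz b l].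

Lemma count_res_rem b c x l :
  x \in l -> count_res b c l = (res b x == c) + count_res b c (rem x l).
Proof. exact: count_rem_cons. Qed.

Lemma count_nz_rem b x l : x \in l -> count_nz b l = (res b x != 0) + count_nz b (rem x l).
Proof. exact: count_rem_cons. Qed.

Lemma count_big_rem b x l : x \in l -> count_big b l = (1 < res b x) + count_big b (rem x l).
Proof. exact: count_rem_cons. Qed.

Section Removal.
Variables (b x : nat) (l : seq nat).
Hypotheses (ndvd_b : ~~ (p %| b)) (xl : x \in l).

Let M := count_res b 1 l.
Let N := count_nz b l.
Let T := sum_res b l.
Let B := count_big b l.

Lemma criterion_rem_zero : res b x = 0 -> criterion b l -> criterion b (rem x l).
Proof.
move=> rx0 [ndvd_l max_1 bound]; split.
- by rewrite (dvd_sumn_rem ndvd_b xl) rx0 eq_sym res_eq0.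
- move=> c c_bd; have := max_1 c c_bd.
  by rewrite !(count_res_rem _ _ xl) rx0; case: c c_bd.
- by move: bound; rewrite (count_res_rem _ _ xl) (count_nz_rem _ xl) (sum_res_rem _ xl) rx0.
Qed.

Lemma criterion_rem_big : 1 < res b x -> res b x != res b (sumn l) ->
  p * M + T + p <= p - 1 + p * N + res b x -> criterion b l -> criterion b (rem x l).
Proof.
move=> rx_gt1 rx_neq bound_x [ndvd_l max_1 _]; have rx_neq1 : res b x != 1 by lia.
split.
- by rewrite (dvd_sumn_rem ndvd_b xl) (negbTE rx_neq).
- move=> c c_bd; have := max_1 c c_bd.
  by rewrite !(count_res_rem _ _ xl) (negbTE rx_neq1) /=; lia.
- move: bound_x; rewrite /M /N /T (count_res_rem _ _ xl) (count_nz_rem _ xl).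
  rewrite (sum_res_rem _ xl).
  by rewrite (negbTE rx_neq1) -lt0n (ltnW rx_gt1) /=; lia.
Qed.

Lemma criterion_rem_one : res b x = 1 -> res b (sumn l) != 1 -> B < M ->
  criterion b l -> criterion b (rem x l).
Proof.
move=> rx1 t_neq1 lt_BM [ndvd_l max_1 bound]; split.
- by rewrite (dvd_sumn_rem ndvd_b xl) rx1 eq_sym (negbTE t_neq1).
- move=> c c_bd; have [->|c_neq1] := eqVneq c 1; first by [].
  have /(count_res_le_big b (rem x l)) : 1 < c by lia.
  by move: lt_BM; rewrite /M /B (count_res_rem _ _ xl) (count_big_rem _ xl) rx1; lia.
- move: bound; rewrite (count_res_rem _ _ xl) (count_nz_rem _ xl) (sum_res_rem _ xl) rx1.
  by rewrite /=; lia.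
Qed.

Let t := res b (sumn l).

(* Rescaling by u = t^-1 turns the parts of residue t into the new parts of residue 1. *)
Lemma criterion_rem_twist u : res b x = 1 -> 1 < t -> t * u = 1 %[mod p] ->
  {in l, forall y, res b y = 1 \/ res b y = t} -> count_res b t l = M ->
  criterion (b * u) (rem x l).
Proof.
move=> rx1 t_gt1 tu1 res_1t cnt_t.
have ndvd_bu : ~~ (p %| b * u) by rewrite Euclid_dvdM // negb_or ndvd_b (ndvd_mulmod_eq1 tu1).
have t_neq1 : (1 == t) = false by rewrite eq_sym; apply/negbTE; lia.
have M'E : count_res (b * u) 1 (rem x l) = M.
  rewrite -cnt_t (count_res_rem _ _ xl) rx1 t_neq1.
  by apply: eq_count => y; rewrite /= (res_mulr_eq1 _ _ tu1) ?res_lt.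
have NE : N = M + M.
  rewrite /N count_nz_split; congr (_ + _); rewrite -cnt_t.
  by apply: eq_in_count => y /res_1t /= [] ->; rewrite ?t_neq1 ?eqxx.
have N'E : count_nz (b * u) (rem x l) = N - 1.
  by rewrite count_nzE // -(count_nzE _ ndvd_b) /N (count_nz_rem _ xl) rx1 /=; lia.
have M_gt0 : 0 < M by rewrite /M (count_res_rem _ _ xl) rx1.
split.
- by rewrite (dvd_sumn_rem ndvd_b xl) rx1 -/t t_neq1.
- move=> c c_bd; rewrite M'E; have [->|c_neq1] := eqVneq c 1; first by rewrite M'E.
  have /(count_res_add_le (b * u) (rem x l))/(_ c_neq1) : 0 < c by lia.
  by rewrite M'E N'E; lia.
- set B' := count_big (b * u) (rem x l).
  have M_eq : M = B'.+1 by move: N'E; rewrite count_nz_split M'E NE; lia.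
  have le_T : sum_res (b * u) (rem x l) <= M + (p - 1) * B'.
    by rewrite -M'E; apply: sum_res_le => y _ _; have := res_lt (b * u) y; lia.
  have pB' : (p - 1) * B' + B' = p * B'.
    by rewrite addnC -mulSn subn1 prednK.
  rewrite M'E count_nz_split M'E M_eq; rewrite M_eq in le_T.
  by rewrite addSn !mulnS mulnDr; lia.
Qed.

End Removal.

(* x is the part to be placed last. *)
Definition criterion_reducible (b : nat) (l : seq nat) : Prop :=
  exists x b', [/\ x \in l, ~~ (p %| b') & criterion b' (rem x l)].

Section Reduction.
Variables (b : nat) (l : seq nat).
Hypotheses (ndvd_b : ~~ (p %| b)) (crit : criterion b l).

Let M := count_res b 1 l.
Let N := count_nz b l.
Let T := sum_res b l.
Let B := count_big b l.
Let t := res b (sumn l).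

Let N_eq : N = M + B. Proof. exact: count_nz_split. Qed.
Let t_gt0 : 0 < t. Proof. by case: crit => ndvd_l _ _; rewrite lt0n res_eq0. Qed.

Lemma reducible_one : t != 1 -> B < M -> criterion_reducible b l.
Proof.
move=> t_neq1 lt_BM; have /hasP[x xl /eqP rx1] : has (fun x => res b x == 1) l.
  by rewrite has_count; apply: leq_ltn_trans lt_BM.
by exists x, b; split=> //; apply: criterion_rem_one.
Qed.

Section Stuck.
Hypothesis all_pos : {in l, forall x, 0 < res b x}.
Hypothesis stuck : {in l, forall x, 1 < res b x ->
  res b x = t \/ p - 1 + p * N + res b x < p * M + T + p}.

Lemma reducible_slack : p * M + T + p <= p - 1 + p * N -> criterion_reducible b l.
Proof.
move=> slack; have big_t : {in l, forall x, 1 < res b x -> res b x = t}.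
  by move=> x xl /(stuck xl) []; lia.
have B_gt0 : 0 < B.
  by rewrite lt0n; apply/eqP => B0; move: slack; rewrite N_eq B0 addn0; lia.
have [x0 x0l rx0_gt1] : exists2 x0, x0 \in l & 1 < res b x0 by apply/hasP; rewrite has_count.
have t_gt1 : 1 < t by rewrite -(big_t x0).
have cnt_t : count_res b t l = B.
  apply: eq_in_count => x xl /=; case: (ltnP 1 (res b x)) => [/(big_t x xl)->|le1].
    by rewrite eqxx.
  by apply/eqP; lia.
have le_BM : B <= M.
  by rewrite -cnt_t; case: crit => _ max_1 _; apply: max_1; rewrite t_gt0 res_lt.
have [lt_BM|BM] := ltnP B M; first by apply: reducible_one; rewrite // gtn_eqF.
have /hasP[x xl /eqP rx1] : has (fun x => res b x == 1) l.
  by rewrite has_count (leq_trans B_gt0 le_BM).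
have [u _ tu1] : exists2 u, 0 < u < p & t * u = 1 %[mod p].
  by apply: mulmod_inv; rewrite gtnNdvd ?res_lt.
exists x, (b * u); split=> //.
  by rewrite Euclid_dvdM // negb_or ndvd_b (ndvd_mulmod_eq1 tu1).
apply: criterion_rem_twist => //; last by rewrite cnt_t; lia.
move=> y yl; case: (ltnP 1 (res b y)) => [/(big_t y yl)|le1]; [right | left] => //.
by have := all_pos yl; lia.
Qed.

(* Here T = p B + t, so every part of residue > 1 has residue at most t. *)
Lemma reducible_tight : 1 < size l -> p - 1 + p * N < p * M + T + p ->
  criterion_reducible b l.
Proof.
move=> size_gt1 tight; have pN : p * N = p * M + p * B by rewrite N_eq mulnDr.
have [_ _ bound] := crit.
have T_ge : p * B <= T by lia.
have t_eq : t = T - p * B.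
  rewrite /t /res -sum_res_mod -/T -{1}(subnKC T_ge) mulnC modnMDl modn_small //; lia.
have le_t : {in l, forall x, 1 < res b x -> res b x <= t}.
  by move=> x xl /(stuck xl) [->|]; lia.
have T_le : T <= M + t * B := sum_res_le le_t.
have tB : t.+1 * B <= p * B by rewrite leq_mul ?res_lt.
have t_neq1 : t != 1.
  apply/eqP => t1; have B0 : B = 0.
    apply/eqP; rewrite -leqn0 leqNgt -has_count.
    by apply/hasP => -[x xl rx_gt1]; have := le_t x xl rx_gt1; lia.
  have N_size : N = size l.
    by rewrite -count_predT; apply: eq_in_count => x /all_pos; rewrite lt0n.
  have := count_nz_le_sum_res b l; rewrite -/N -/T; lia.
by apply: reducible_one => //; rewrite mulSn in tB; lia.
Qed.

End Stuck.

Lemma reducible_of_criterion : 1 < size l -> criterion_reducible b l.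
Proof.
move=> size_gt1.
have [/hasP[x xl /eqP rx0]|no_zero] := boolP (has (fun x => res b x == 0) l).
  by exists x, b; split=> //; apply: criterion_rem_zero.
have all_pos : {in l, forall x, 0 < res b x}.
  by move=> x xl; rewrite lt0n; apply: contra no_zero => rx0; apply/hasP; exists x.
have [/hasP[x xl /and3P[rx_gt1 rx_neq bound_x]]|no_big] := boolP (has (fun x =>
    [&& 1 < res b x, res b x != t & p * M + T + p <= p - 1 + p * N + res b x]) l).
  by exists x, b; split=> //; apply: criterion_rem_big.
have stuck : {in l, forall x, 1 < res b x ->
    res b x = t \/ p - 1 + p * N + res b x < p * M + T + p}.
  move=> x xl rx_gt1; have [|rx_neq] := eqVneq (res b x) t; [by left | right].
  rewrite ltnNge; apply: contra no_big => bound_x; apply/hasP; exists x => //.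
  by rewrite rx_gt1 rx_neq.
have [slack|tight] := leqP (p * M + T + p) (p - 1 + p * N).
  exact: reducible_slack.
exact: reducible_tight.
Qed.

End Reduction.

Lemma criterion_has_cumulative_perm b l :
  ~~ (p %| b) -> criterion b l -> has_cumulative_perm p l.
Proof.
move: {2}(size l) (leqnn (size l)) => n; elim: n l b => [|n IHn] l b.
  by rewrite leqn0 => /nilP-> _ [/negP[]]; rewrite dvdn0.
move=> size_l ndvd_b crit; have [ndvd_l _ _] := crit.
have [size_le1|size_gt1] := leqP (size l) 1.
  case: l size_l size_le1 ndvd_l {crit} => [|x [|//]] _ _; first by rewrite dvdn0.
  by move=> ndvd_x; apply: (has_cumulative_perm_rem (mem_head x [::])); rewrite //= eqxx; left.
have [x [b' [xl ndvd_b' crit']]] := reducible_of_criterion ndvd_b crit size_gt1.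
apply: (has_cumulative_perm_rem xl ndvd_l); right; apply: IHn ndvd_b' crit'.
by rewrite size_rem // -ltnS (ltn_predK size_gt1).
Qed.

Lemma addmod_step s y : s < p -> y < p -> (s + y) %% p != 0 ->
  p * (y == 1) + s + y <= (s + y) %% p + p * (y != 0).
Proof.
move=> s_lt y_lt; have [sy_lt|sy_ge] := ltnP (s + y) p.
  by rewrite modn_small //; case: y {y_lt} sy_lt => [|[|y]] /=; lia.
have -> : s + y = (s + y - p) + p by lia.
rewrite modnDr modn_small; last by lia.
by case: y {y_lt} sy_ge => [|[|y]] /= sy_ge /eqP; lia.
Qed.

Lemma ndvd_psums_bound b d : ~~ (p %| b) -> ndvd_psums p d ->
  p * count_res b 1 d + sum_res b d <= res b (sumn d) + p * count_nz b d.
Proof.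
move=> ndvd_b; elim/last_ind: d => [|d x IHd]; first by rewrite /count_res /sum_res /= muln0.
rewrite ndvd_psums_rcons => /andP[/IHd bound_d ndvd_dx].
have res_dx : res b (sumn (rcons d x)) = (res b (sumn d) + res b x) %% p.
  by rewrite /res sumn_rcons modnDm mulnDr.
have := addmod_step (res_lt b (sumn d)) (res_lt b x).
rewrite -res_dx res_eq0 // ndvd_dx => /(_ isT) step.
rewrite res_dx /count_res /count_nz /sum_res -!cats1 !count_cat map_cat sumn_cat /=.
move: bound_d; rewrite /count_res /count_nz /sum_res; lia.
Qed.

Lemma has_cumulative_perm_bound b l : ~~ (p %| b) -> has_cumulative_perm p l ->
  ~~ (p %| sumn l) /\ p * count_res b 1 l + sum_res b l <= p - 1 + p * count_nz b l.
Proof.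
move=> ndvd_b [d perm_dl cum_d]; rewrite -(perm_sumn perm_dl); split.
  exact: cumulative_ndvd_sumn.
have [-> -> ->] : [/\ count_res b 1 l = count_res b 1 d, count_nz b l = count_nz b d
                    & sum_res b l = sum_res b d].
  by rewrite /count_res /count_nz /sum_res !(permP perm_dl) (perm_sumn (perm_map _ perm_dl)).
case/andP: cum_d => _ /(ndvd_psums_bound ndvd_b).
by have := res_lt b (sumn d); lia.
Qed.

End Residues.

Lemma rvec_count q l j : is_partition l ->
  rvec q l j = count (fun x => x == j %[mod q]) l.
Proof.
case/andP=> /allP l_pos _; rewrite /rvec /rj /nmult.
under eq_bigr => i _ do rewrite -sum1_count.
rewrite (exchange_big_dep (fun x => x == j %[mod q])) /= => [|i x ij /eqP-> //].
rewrite -sum1_count big_seq_cond [RHS]big_seq_cond; apply: eq_bigr => x /andP[xl xj].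
rewrite (eq_bigl (fun i => (i == j %[mod q]) && (i == x))) => [|i]; last first.
  by rewrite /= (eq_sym x).
rewrite big_nat1_cond_eq l_pos // xj ltnS andbT.
by rewrite (leq_bigmax_seq (F := id)).
Qed.

Section Conversion.
Variables (p a b : nat).
Hypotheses (p_prime : prime p) (ab1 : a * b = 1 %[mod p]).

Lemma res_eq_mod x c : c < p -> (res p b x == c) = (x == a * c %[mod p]).
Proof.
move=> c_lt; rewrite /res; apply/eqP/eqP => [<-|x_ac].
  by rewrite modnMmr mulnA -modnMml ab1 modnMml mul1n.
by rewrite -modnMmr x_ac modnMmr mulnA (mulnC b) -modnMml ab1 modnMml mul1n modn_small.
Qed.

Lemma count_res_rvec l c : is_partition l -> c < p ->
  count_res p b c l = rvec p l (a * c %% p).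
Proof.
move=> l_part c_lt; rewrite rvec_count //.
by apply: eq_count => x; rewrite /= res_eq_mod ?modn_mod.
Qed.

Lemma rtwist_rvec l c : is_partition l -> 0 < c < p ->
  rtwist p b (rvec p l) c = count_res p b c l.
Proof.
move=> l_part /andP[c_gt0 c_lt]; rewrite (count_res_rvec l_part c_lt) /rtwist.
have ac_gt0 : 0 < a * c %% p.
  rewrite lt0n -/(dvdn p _) Euclid_dvdM // negb_or (gtnNdvd c_gt0 c_lt) andbT.
  by apply: (ndvd_mulmod_eq1 p_prime (t := b)); rewrite mulnC.
rewrite (@eq_in_filter _ _ (pred1 (a * c %% p))) => [|i]; last first.
  rewrite mem_iota => /andP[i_gt0]; rewrite add1n (ltn_predK (prime_gt1 p_prime)) => i_lt.
  by rewrite /= (modn_small c_lt) -/(res p b i) res_eq_mod // (modn_small i_lt).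
rewrite filter_pred1_uniq ?iota_uniq // mem_iota ac_gt0 /=.
by rewrite add1n (ltn_predK (prime_gt1 p_prime)) ltn_pmod ?prime_gt0.
Qed.

Lemma weight_bound_rnorm l : is_partition l ->
  (count_res p b 1 l <= rnorm p (rtwist p b (rvec p l))) =
  (p * count_res p b 1 l + sum_res p b l <= p - 1 + p * count_nz p b l).
Proof.
move=> l_part; have := weighted_count_res p_prime b l.
rewrite big_ltn ?prime_gt1 // /rnorm.
have -> : \sum_(2 <= c < p) (p - c) * rtwist p b (rvec p l) c =
          \sum_(2 <= c < p) (p - c) * count_res p b c l.
  by apply: eq_big_nat => c c_bd; rewrite rtwist_rvec //; lia.
move: (\sum_(2 <= c < p) _) => S; have := prime_gt0 p_prime.
by case: p => // q _; rewrite subSS subn0 => <-; apply/idP/idP; lia.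
Qed.

End Conversion.

Lemma rmax_attained q (r : nat -> nat) : 1 < q -> exists2 a, 0 < a < q & r a = rmax q r.
Proof.
move=> q_gt1; rewrite /rmax (@big_nat_widenl _ _ _ 1 0) // big_mkord.
rewrite (bigmax_eq_arg (Ordinal q_gt1)) //.
by case: arg_maxnP => // i /= i_gt0 _; exists i; rewrite ?i_gt0 ?ltn_ord.
Qed.

Theorem theorem1 (p : nat) (l : seq nat) :
  prime p -> is_partition l ->
  (cnum p l != 0) <->
  (~~ (p %| sumn l) /\
   exists a b : nat,
     [/\ 0 < a < p, 0 < b < p, a * b == 1 %[mod p],
         rvec p l a = rmax p (rvec p l) &
         rmax p (rvec p l) <= rnorm p (rtwist p b (rvec p l))]).
Proof.
move=> p_prime l_part; have p_gt1 := prime_gt1 p_prime.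
have res1E a b : a * b = 1 %[mod p] -> a < p -> count_res p b 1 l = rvec p l a.
  by move=> ab1 a_lt; rewrite (count_res_rvec ab1) // muln1 modn_small.
rewrite cnum_neq0; split=> [cum_l|[ndvd_l [a [b [/andP[a_gt0 a_lt] /andP[b_gt0 b_lt]]]]]].
  have [a /andP[a_gt0 a_lt] a_max] := rmax_attained (rvec p l) p_gt1.
  have [b /andP[b_gt0 b_lt] ab1] := mulmod_inv p_prime (negbT (gtnNdvd a_gt0 a_lt)).
  have [ndvd_l bound] := has_cumulative_perm_bound p_prime (negbT (gtnNdvd b_gt0 b_lt)) cum_l.
  split=> //; exists a, b; split; rewrite ?a_gt0 ?b_gt0 //; first exact/eqP.
  by rewrite -a_max -(res1E _ _ ab1 a_lt) (weight_bound_rnorm p_prime ab1).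
move=> /eqP ab1 a_max; rewrite -a_max -(res1E _ _ ab1 a_lt) => bound.
apply: (criterion_has_cumulative_perm p_prime (b := b)); first by rewrite gtnNdvd.
split=> //; last by rewrite -(weight_bound_rnorm p_prime ab1).
move=> c /andP[c_gt0 c_lt]; rewrite (res1E _ _ ab1 a_lt) a_max (count_res_rvec ab1) //.
apply: leq_bigmax_seq; rewrite // mem_index_iota lt0n ltn_pmod ?prime_gt0 // andbT.
by rewrite -/(dvdn p _) Euclid_dvdM // negb_or !gtnNdvd.
Qed.
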